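(* Consider scheduling a single task on $n\ge 2$ machines without payments, in the model where machines are bound by their declarations (described in the context). Fix constants $L>2(n-1)$ and $c>1$, and let $\mathcal A_{L,c}$ be the following randomized allocation rule. Given declarations $\hat{\mathbf t}=(\hat t_1,\dots,\hat t_n)$, let $\hat t_{\min}$ be the smallest declaration and $N_{\min}$ the set of machines declaring it, and let $\hat t_{\mathrm{sec}}$ be the second smallest distinct declaration and $N_{\mathrm{sec}}$ the set of machines declaring it (if all machines declare the same value, set $\hat t_{\mathrm{sec}}=\hat t_{\min}$); let $n_{\min}=|N_{\min}|$, $n_{\mathrm{sec}}=|N_{\mathrm{sec}}|$. The probability $a_i$ that machine $i$ gets the task is: (i) if $\hat t_{\min}=\hat t_{\mathrm{sec}}$: $a_i=\tfrac1n$ for all $i$; (ii) if $\hat t_{\min}<\hat t_{\mathrm{sec}}<c\,\hat t_{\min}$: $a_i=\frac{1}{L\,n_{\min}}$ for $i\in N_{\min}$, $a_i=\frac{1-1/L}{n_{\mathrm{sec}}}$ for $i\in N_{\mathrm{sec}}$, and $a_i=0$ otherwise; (iii) if $\hat t_{\mathrm{sec}}\ge c\,\hat t_{\min}$: $a_i=\frac{1}{n_{\min}}\Big(1-\sum_{k\notin N_{\min}}\frac{\hat t_{\min}}{L\,\hat t_k}\Big)$ for $i\in N_{\min}$, and $a_i=\frac{\hat t_{\min}}{L\,\hat t_i}$ for $i\notin N_{\min}$. Then the pure Price of Anarchy of $\mathcal A_{L,c}$ is at most $1+\frac{n-1}{L}$.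
   Context: Model: there are $n$ machines and one task. Machine $i$ has a private true execution time $t_i\ge 0$ for the task and reports a declaration $\hat t_i\ge 0$. A (randomized) allocation rule maps the declaration vector $\hat{\mathbf t}$ to probabilities $a_i(\hat{\mathbf t})$ with $\sum_i a_i=1$; no payments are used. Machines are bound by their declarations: if machine $i$ gets the task she executes it for time $\max\{\hat t_i,t_i\}$. Hence the (expected) cost of machine $i$ is $C_i(\hat{\mathbf t})=a_i(\hat{\mathbf t})\max\{\hat t_i,t_i\}$, and the makespan is $\mathcal M(\hat{\mathbf t})=\sum_i a_i(\hat{\mathbf t})\max\{\hat t_i,t_i\}$. A pure Nash equilibrium is a deterministic declaration vector $\hat{\mathbf t}$ such that for every machine $i$ and every alternative declaration $x\ge 0$, $C_i(\hat{\mathbf t})\le C_i(x,\hat{\mathbf t}_{-i})$. The pure Price of Anarchy of a rule is the supremum, over all true instances $\mathbf t$, of the ratio of the makespan of the worst pure Nash equilibrium to the optimal makespan $\min_i t_i$. *)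

From mathcomp Require Import all_boot all_order all_algebra.
Set Implicit Arguments. Unset Strict Implicit. Unset Printing Implicit Defensive.
Import Order.TTheory GRing.Theory Num.Theory.
Local Open Scope ring_scope.

Section Sched.
Variables (R : realFieldType) (n : nat).

Definition tmin (d : 'I_n -> R) : R :=
  match [pick i | [forall j, d i <= d j]] with Some i => d i | None => 0 end.

Definition tsec (d : 'I_n -> R) : R :=
  match [pick i | (tmin d < d i) &&
                  [forall j, (tmin d < d j) ==> (d i <= d j)]] with
  | Some i => d i | None => tmin d end.

Definition Nmin (d : 'I_n -> R) : {set 'I_n} := [set i | d i == tmin d].
Definition Nsec (d : 'I_n -> R) : {set 'I_n} := [set i | d i == tsec d].

Definition alloc (L c : R) (d : 'I_n -> R) (i : 'I_n) : R :=
  let nmin := (#|Nmin d|)%:R in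
  let nsec := (#|Nsec d|)%:R in
  if tmin d == tsec d then 1 / n%:R
  else if tsec d < c * tmin d then
    (if i \in Nmin d then 1 / (L * nmin)
     else if i \in Nsec d then (1 - 1 / L) / nsec else 0)
  else
    (if i \in Nmin d then
       (1 - \sum_(k | k \notin Nmin d) tmin d / (L * d k)) / nmin
     else tmin d / (L * d i)).

(* expected cost of machine i (bound by declarations) *)
Definition cost (L c : R) (t d : 'I_n -> R) (i : 'I_n) : R :=
  alloc L c d i * Num.max (d i) (t i).

Definition makespan (L c : R) (t d : 'I_n -> R) : R :=
  \sum_i alloc L c d i * Num.max (d i) (t i).

Definition upd (d : 'I_n -> R) (i : 'I_n) (x : R) : 'I_n -> R :=
  fun j => if j == i then x else d j.

Definition pureNE (L c : R) (t d : 'I_n -> R) : Prop :=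
  (forall i, 0 <= d i) /\
  (forall i x, 0 <= x -> cost L c t d i <= cost L c t (upd d i x) i).

End Sched.

From mathcomp Require Import all_boot all_order all_algebra.
From mathcomp Require Import lra.
Import Order.TTheory GRing.Theory Num.Theory.
Local Open Scope ring_scope.
Set Implicit Arguments. Unset Strict Implicit. Unset Printing Implicit Defensive.

(* A machine that is not the only one declaring the minimum tmin can declare a
   huge value and then pays at most tmin / L.  Against this threat neither case
   (i) nor case (ii) of the rule can be an equilibrium, and in case (iii) the
   minimal declarer p receives more than 1/L because L > n; hence p is unique.
   Deviations of p just below or just above its declaration, and of any other
   machine to a value just below tmin, then force t_p = tmin = min_i t_i, so p
   pays at most tmin and each of the n - 1 other machines at most tmin / L. *)

Section Declarations.
Variables (R : realFieldType) (n : nat).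
Implicit Types (d : 'I_n -> R) (i j k : 'I_n) (x : R).

Lemma exists_neq : (1 < n)%N -> forall i, exists j, j != i.
Proof.
move=> n_gt1 i; have /card_gt0P[j] : (0 < #|predC1 i|)%N.
  by rewrite cardC1 card_ord -ltnS prednK // ltnW.
by exists j.
Qed.

Lemma tmin_le d j : tmin d <= d j.
Proof.
rewrite /tmin; case: pickP => [i /forallP|none]; first exact.
have [i _ i_min] := arg_minP d (isT : predT j).
by move: (none i) => /forallP[] k; apply: i_min.
Qed.

Lemma tmin_mem d j : exists i, d i = tmin d.
Proof.
rewrite /tmin; case: pickP => [i _|none]; first by exists i.
have [i _ i_min] := arg_minP d (isT : predT j).
by move: (none i) => /forallP[] k; apply: i_min.
Qed.

Lemma tmin_ge0 d : (forall i, 0 <= d i) -> 0 <= tmin d.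
Proof. by move=> d_ge0; rewrite /tmin; case: pickP. Qed.

Lemma tmin_eq d i : (forall j, d i <= d j) -> tmin d = d i.
Proof. by move=> i_min; apply/le_anti; rewrite tmin_le /=; have [k <-] := tmin_mem d i. Qed.

Lemma tsec_tmin d : (forall j, d j <= tmin d) -> tsec d = tmin d.
Proof.
move=> flat; rewrite /tsec; case: pickP => [i /andP[lt_i _]|//].
by move: (flat i); rewrite leNgt lt_i.
Qed.

Lemma tsecP d j : tmin d < d j ->
  [/\ tmin d < tsec d, exists i, d i = tsec d & forall k, tmin d < d k -> tsec d <= d k].
Proof.
move=> lt_j; rewrite /tsec; case: pickP => [i /andP[lt_i /forallP i_min]|none].
  by split=> // [|k lt_k]; [exists i | have /implyP := i_min k; apply].
have [i lt_i i_min] := arg_minP (P := [pred i | tmin d < d i]) d lt_j.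
move: (none i); rewrite (lt_i : tmin d < d i) /= => /forallP[] k; apply/implyP; exact: i_min.
Qed.

Lemma tmin_lt_tsec d j : tmin d < d j -> tmin d < tsec d.
Proof. by case/tsecP. Qed.

Lemma tsec_mem d j : tmin d < d j -> exists i, d i = tsec d.
Proof. by case/tsecP. Qed.

Lemma tsec_le d j k : tmin d < d j -> tmin d < d k -> tsec d <= d k.
Proof. by case/tsecP=> _ _; apply. Qed.

Lemma tsec_ge d j x : tmin d < d j -> (forall k, tmin d < d k -> x <= d k) -> x <= tsec d.
Proof.
move=> lt_j ge_x; have [i d_i] := tsec_mem lt_j.
by rewrite -d_i ge_x // d_i (tmin_lt_tsec lt_j).
Qed.

Lemma upd_eq d i x : upd d i x i = x.
Proof. by rewrite /upd eqxx. Qed.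

Lemma upd_neq d i x j : j != i -> upd d i x j = d j.
Proof. by rewrite /upd => /negbTE ->. Qed.

Lemma tmin_upd_high d i x j : j != i -> d j = tmin d -> tmin d <= x ->
  tmin (upd d i x) = tmin d.
Proof.
move=> ji d_j le_x; rewrite (tmin_eq (i := j)) => [|k]; rewrite upd_neq // d_j //.
by case: (eqVneq k i) => [->|ki]; rewrite ?upd_eq ?upd_neq ?tmin_le.
Qed.

Lemma tmin_upd_low d i x : (forall j, j != i -> x < d j) -> tmin (upd d i x) = x.
Proof.
move=> lt_x; rewrite (tmin_eq (i := i)) upd_eq // => j.
by case: (eqVneq j i) => [->|ji]; rewrite ?upd_eq ?upd_neq // ltW ?lt_x.
Qed.

Lemma Nmin_set1 d i : d i = tmin d -> (forall j, j != i -> tmin d < d j) -> Nmin d = [set i].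
Proof.
move=> d_i lt_v; apply/setP=> j; rewrite !inE.
by case: (eqVneq j i) => [->|ji]; rewrite ?d_i ?eqxx // gt_eqF ?lt_v.
Qed.

Lemma Nmin_upd_low d i x : (forall j, j != i -> x < d j) -> Nmin (upd d i x) = [set i].
Proof.
move=> lt_x; apply: Nmin_set1; rewrite tmin_upd_low ?upd_eq // => j ji.
by rewrite upd_neq ?lt_x.
Qed.

End Declarations.

Section Allocation.
Variables (R : realFieldType) (n : nat) (L c : R).
Implicit Types (t d : 'I_n -> R) (i j k : 'I_n) (x : R).

Lemma alloc_tie d i : tmin d = tsec d -> alloc L c d i = 1 / n%:R.
Proof. by rewrite /alloc => ->; rewrite eqxx. Qed.

Lemma alloc_near_min d i : tmin d != tsec d -> tsec d < c * tmin d -> i \in Nmin d ->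
  alloc L c d i = 1 / (L * #|Nmin d|%:R).
Proof. by rewrite /alloc => /negbTE -> -> ->. Qed.

Lemma alloc_near_sec d i : tmin d != tsec d -> tsec d < c * tmin d ->
  i \notin Nmin d -> i \in Nsec d -> alloc L c d i = (1 - 1 / L) / #|Nsec d|%:R.
Proof. by rewrite /alloc => /negbTE -> -> /negbTE -> ->. Qed.

Lemma alloc_near_other d i : tmin d != tsec d -> tsec d < c * tmin d ->
  i \notin Nmin d -> i \notin Nsec d -> alloc L c d i = 0.
Proof. by rewrite /alloc => /negbTE -> -> /negbTE -> /negbTE ->. Qed.

Lemma alloc_far_min d i : tmin d != tsec d -> c * tmin d <= tsec d -> i \in Nmin d ->
  alloc L c d i = (1 - \sum_(k | k \notin Nmin d) tmin d / (L * d k)) / #|Nmin d|%:R.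
Proof. by rewrite /alloc => /negbTE -> /le_gtF -> ->. Qed.

Lemma alloc_far_other d i : tmin d != tsec d -> c * tmin d <= tsec d -> i \notin Nmin d ->
  alloc L c d i = tmin d / (L * d i).
Proof. by rewrite /alloc => /negbTE -> /le_gtF -> /negbTE ->. Qed.

Lemma cost_upd_high t d i x : 0 <= tmin (upd d i x) -> tmin (upd d i x) < x ->
  c * tmin (upd d i x) <= x -> t i <= x ->
  cost L c t (upd d i x) i =
    if tsec (upd d i x) < c * tmin (upd d i x) then 0 else tmin (upd d i x) / L.
Proof.
set d' := upd d i x => tmin_d_ge0 v_lt_x cv_le_x t_le_x.
have d'_i : d' i = x by rewrite /d' upd_eq.
have v_lt_s : tmin d' < tsec d' by apply: (tmin_lt_tsec (j := i)); rewrite d'_i.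
have i_notin_min : i \notin Nmin d' by rewrite inE d'_i gt_eqF.
rewrite /cost d'_i (max_l t_le_x); case: ltP => [s_lt|s_ge].
  rewrite alloc_near_other ?mul0r ?lt_eqF // inE d'_i gt_eqF //.
  exact: lt_le_trans s_lt cv_le_x.
rewrite alloc_far_other ?lt_eqF // d'_i invfM mulrA mulfVK //.
by rewrite gt_eqF // (le_lt_trans tmin_d_ge0).
Qed.

Lemma cost_upd_high_le t d i x : 0 <= L -> 0 <= tmin (upd d i x) ->
  tmin (upd d i x) < x -> c * tmin (upd d i x) <= x -> t i <= x ->
  cost L c t (upd d i x) i <= tmin (upd d i x) / L.
Proof.
move=> L_ge0 tmin_d_ge0 v_lt_x cv_le_x t_le_x; rewrite cost_upd_high //.
by case: ifP => // _; rewrite divr_ge0.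
Qed.

Lemma alloc_far_set1 d i : tmin d != tsec d -> c * tmin d <= tsec d -> Nmin d = [set i] ->
  alloc L c d i = 1 - tmin d * \sum_(k | k != i) (L * d k)^-1.
Proof.
move=> v_neq_s far N_eq; rewrite alloc_far_min // N_eq ?set11 // cards1 mulr1n divr1.
by rewrite mulr_sumr; congr (1 - _); apply: eq_bigl => k; rewrite inE.
Qed.

Lemma alloc_upd_low d i x j : j != i -> (forall k, k != i -> x < d k) ->
  alloc L c (upd d i x) i =
    if tsec (upd d i x) < c * x then L^-1 else 1 - x * \sum_(k | k != i) (L * d k)^-1.
Proof.
move=> ji x_lt; have v_eq := tmin_upd_low x_lt; have N_eq := Nmin_upd_low x_lt.
have x_lt_s : x < tsec (upd d i x).
  by rewrite -{1}v_eq (tmin_lt_tsec (j := j)) // v_eq upd_neq // x_lt.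
have v_neq_s : tmin (upd d i x) != tsec (upd d i x) by rewrite v_eq lt_eqF.
case: ltP => [s_lt|s_ge].
  by rewrite alloc_near_min // ?v_eq // N_eq ?set11 // cards1 mulr1n mulr1 div1r.
rewrite alloc_far_set1 // ?v_eq //; congr (1 - x * _).
by apply: eq_bigr => k ki; rewrite upd_neq.
Qed.

End Allocation.

Section Equilibrium.
Variables (R : realFieldType) (n : nat) (L c : R) (t d : 'I_n -> R).
Hypotheses (n_ge2 : (2 <= n)%N) (L_gt : 2 * (n - 1)%:R < L) (c_gt1 : 1 < c).
Hypotheses (t_gt0 : forall i, 0 < t i) (d_ge0 : forall i, 0 <= d i).
Hypothesis NE : forall i x, 0 <= x -> cost L c t d i <= cost L c t (upd d i x) i.

Let i0 : 'I_n := Ordinal (ltnW n_ge2).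

Let natr_n_ge2 : 2 <= n%:R :> R.
Proof. by rewrite (ler_nat R 2 n). Qed.

Let L_gt_n : n%:R < L.
Proof. by move: L_gt natr_n_ge2; rewrite natrB ?(ltnW n_ge2) //; lra. Qed.

Let L_gt2 : 2 < L.
Proof. by move: L_gt_n natr_n_ge2; lra. Qed.

Let L_gt0 : 0 < L.
Proof. by move: L_gt2; lra. Qed.

Let invL_bounds : 0 < L^-1 /\ 2 * L^-1 < 1.
Proof.
have L_invL : L * L^-1 = 1 by rewrite mulfV ?gt_eqF.
have invL_gt0 : 0 < L^-1 by rewrite invr_gt0.
by split=> //; move: L_gt2; nra.
Qed.

Let tmin_d_ge0 : 0 <= tmin d.
Proof. exact: tmin_ge0. Qed.

Lemma NE_cost_le_shared_tmin i j : j != i -> d j = tmin d -> cost L c t d i <= tmin d / L.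
Proof.
move=> ji d_j; have ti_gt0 := t_gt0 i.
have v_le_cv : tmin d <= c * tmin d by rewrite ler_peMl // ltW.
pose x := c * tmin d + t i + 1.
have v_lt_x : tmin d < x by rewrite /x; lra.
have cv_le_x : c * tmin d <= x by rewrite /x; lra.
have ti_le_x : t i <= x by rewrite /x; move: tmin_d_ge0; lra.
have v_eq : tmin (upd d i x) = tmin d := tmin_upd_high ji d_j (ltW v_lt_x).
apply: le_trans (NE i (le_trans tmin_d_ge0 (ltW v_lt_x))) _.
by rewrite -v_eq cost_upd_high_le ?v_eq ?upd_eq ?(ltW L_gt0).
Qed.

Lemma NE_not_flat : exists j, tmin d < d j.
Proof.
have [/existsP //|/existsPn flat] := boolP [exists j, tmin d < d j].
have d_eq j : d j = tmin d by apply/le_anti; rewrite tmin_le andbT leNgt flat.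
have [q q_neq] := exists_neq n_ge2 i0.
have := NE_cost_le_shared_tmin q_neq (d_eq q).
rewrite /cost alloc_tie ?tsec_tmin // => [|j]; last by rewrite d_eq.
rewrite d_eq mul1r mulrC => le_cost; exfalso.
set M := Num.max (tmin d) (t i0) in le_cost.
have v_le_M : tmin d <= M by rewrite le_max lexx.
have t_le_M : t i0 <= M by rewrite le_max lexx orbT.
have t0_gt0 := t_gt0 i0.
have invL_lt_invn : L^-1 < n%:R^-1 by rewrite ltf_pV2 ?posrE ?L_gt_n //; move: natr_n_ge2; lra.
have [invL_gt0 _] := invL_bounds.
have : 0 < (n%:R^-1 - L^-1) * M by apply: mulr_gt0; lra.
have : 0 <= L^-1 * (M - tmin d) by apply: mulr_ge0; lra.
lra.
Qed.

Lemma NE_far : c * tmin d <= tsec d.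
Proof.
rewrite leNgt; apply/negP => near.
have [j v_lt_j] := NE_not_flat.
have v_lt_s := tmin_lt_tsec v_lt_j.
have [q d_q] := tsec_mem v_lt_j.
have [p d_p] := tmin_mem d i0.
have pq : p != q by apply/eqP => pq; move: v_lt_s; rewrite -d_q -pq d_p ltxx.
have tq_gt0 := t_gt0 q; have v_ge0 := tmin_d_ge0.
have v_le_cv : tmin d <= c * tmin d by rewrite ler_peMl // ltW.
pose x := c * tmin d + t q + 1.
have v_lt_x : tmin d < x by rewrite /x; lra.
have v_eq : tmin (upd d q x) = tmin d := tmin_upd_high pq d_p (ltW v_lt_x).
have cv_le_x : c * tmin d <= x by rewrite /x; lra.
have tq_le_x : t q <= x by rewrite /x; lra.
have q_notin : q \notin Nmin d by rewrite inE d_q gt_eqF.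
have q_in : q \in Nsec d by rewrite inE d_q.
have v_neq_s : tmin d != tsec d by rewrite lt_eqF.
have := NE q (le_trans v_ge0 (ltW v_lt_x)).
rewrite {1}/cost alloc_near_sec // d_q.
rewrite cost_upd_high ?v_eq ?upd_eq //.
have s_le_M : tsec d <= Num.max (tsec d) (t q) by rewrite le_max lexx.
move: (Num.max _ _) s_le_M => M s_le_M.
have [invL_gt0 invL_half] := invL_bounds.
have Nsec_gt0 : 0 < #|Nsec d|%:R :> R by rewrite ltr0n card_gt0; apply/set0Pn; exists q.
case: ifP => [_ le_cost|/negbT s'_ge].
  suff : 0 < (1 - 1 / L) / #|Nsec d|%:R * M by lra.
  by rewrite div1r !mulr_gt0 ?invr_gt0 //; lra.
(* A second machine declaring tsec d would keep the deviation in case (ii). *)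
have Nsec_eq : Nsec d = [set q].
  apply/setP => k; rewrite !inE; case: (eqVneq k q) => [->|kq]; first by rewrite d_q eqxx.
  apply/negbTE/eqP => d_k.
  have s'_le : tsec (upd d q x) <= tsec d.
    by rewrite -d_k -(upd_neq d x kq) (tsec_le (j := k)) // v_eq upd_neq // d_k.
  by move: s'_ge; rewrite -leNgt => /le_trans/(_ s'_le); rewrite leNgt near.
rewrite Nsec_eq cards1 ?mulr1n divr1 div1r => le_cost.
have : 0 < (1 - L^-1) * (M - tmin d) by apply: mulr_gt0; lra.
have : 0 <= (1 - 2 * L^-1) * tmin d by apply: mulr_ge0; lra.
lra.
Qed.

Lemma NE_tmin_neq_tsec : tmin d != tsec d.
Proof. by have [j /tmin_lt_tsec/lt_eqF ->] := NE_not_flat. Qed.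

Lemma NE_sum_ratio_le (P : pred 'I_n) : L * \sum_(k | P k) tmin d / (L * d k) <= #|P|%:R.
Proof.
have L_neq0 : L != 0 by rewrite gt_eqF.
rewrite mulr_sumr -sumr_const; apply: ler_sum => k _.
rewrite invfM mulrCA mulVKf //; have [->|dk_neq0] := eqVneq (d k) 0.
  by rewrite invr0 mulr0.
by rewrite ler_pdivrMr ?mul1r ?tmin_le // lt0r dk_neq0 d_ge0.
Qed.

Lemma NE_alloc_min_gt p : p \in Nmin d -> 1 < L * alloc L c d p.
Proof.
move=> p_in; rewrite alloc_far_min ?NE_tmin_neq_tsec ?NE_far //.
have Nmin_gt0 : 0 < #|Nmin d|%:R :> R by rewrite ltr0n card_gt0; apply/set0Pn; exists p.
rewrite mulrA ltr_pdivlMr // mul1r mulrBr mulr1.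
have := NE_sum_ratio_le [pred k | k \notin Nmin d].
have : #|Nmin d|%:R + #|[pred k | k \notin Nmin d]|%:R = n%:R :> R.
  by rewrite -natrD cardC card_ord.
move: L_gt_n; lra.
Qed.

Lemma NE_min_unique p j : d p = tmin d -> j != p -> tmin d < d j.
Proof.
move=> d_p jp; rewrite lt_neqAle tmin_le andbT eq_sym; apply/eqP => d_j.
have A_gt : 1 < L * alloc L c d p by apply: NE_alloc_min_gt; rewrite inE d_p.
have := NE_cost_le_shared_tmin jp d_j; rewrite /cost d_p.
have v_le_M : tmin d <= Num.max (tmin d) (t p) by rewrite le_max lexx.
have t_le_M : t p <= Num.max (tmin d) (t p) by rewrite le_max lexx orbT.
move: (alloc L c d p) (Num.max _ _) A_gt v_le_M t_le_M => A M A_gt v_le_M t_le_M le_cost.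
have [invL_gt0 _] := invL_bounds; have tp_gt0 := t_gt0 p.
have invL_lt_A : L^-1 < A by rewrite -[L^-1]mulr1 ltr_pdivrMl.
have : 0 < (A - L^-1) * M by apply: mulr_gt0; lra.
have : 0 <= L^-1 * (M - tmin d) by apply: mulr_ge0; lra.
lra.
Qed.

Section UniqueMinimum.
Variable p : 'I_n.
Hypothesis d_p : d p = tmin d.

Let others_gt j : j != p -> tmin d < d j.
Proof. exact: NE_min_unique d_p. Qed.

Lemma NE_alloc_tmin : alloc L c d p = 1 - tmin d * \sum_(k | k != p) (L * d k)^-1.
Proof. by rewrite alloc_far_set1 ?NE_tmin_neq_tsec ?NE_far ?(Nmin_set1 d_p others_gt). Qed.

Lemma NE_sum_inv_gt0 : 0 < \sum_(k | k != p) (L * d k)^-1.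
Proof.
have inv_gt0 k : k != p -> 0 < (L * d k)^-1.
  by move=> kp; rewrite invr_gt0 mulr_gt0 // (le_lt_trans tmin_d_ge0 (others_gt kp)).
have [q qp] := exists_neq n_ge2 p.
rewrite (bigD1 q) //=; apply: ltr_pwDl; first exact: inv_gt0.
by apply: sumr_ge0 => k /andP[kp _]; rewrite ltW ?inv_gt0.
Qed.

Lemma NE_tmin_sum_lt_half : 2 * (tmin d * \sum_(k | k != p) (L * d k)^-1) < 1.
Proof.
have := NE_sum_ratio_le (predC1 p); rewrite cardC1 card_ord -mulr_sumr /= => le_sum.
rewrite -(ltr_pM2l L_gt0) mulr1; move: L_gt; rewrite subn1.
lra.
Qed.

Lemma NE_tmin_le_tp : tmin d <= t p.
Proof.
rewrite leNgt; apply/negP => tp_lt_v.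
have [q qp] := exists_neq n_ge2 p.
have tp_lt k : k != p -> t p < d k by move=> kp; apply: lt_trans tp_lt_v (others_gt kp).
have v'_eq := tmin_upd_low tp_lt.
have s_le_s' : tsec d <= tsec (upd d p (t p)).
  apply: (tsec_ge (j := q)) => [|k]; first by rewrite v'_eq upd_neq ?tp_lt.
  rewrite v'_eq; case: (eqVneq k p) => [->|kp]; first by rewrite upd_eq ltxx.
  by rewrite upd_neq // => _; apply: tsec_le (others_gt kp) (others_gt kp).
have ctp_lt_s' : c * t p < tsec (upd d p (t p)).
  apply: lt_le_trans s_le_s'; apply: lt_le_trans NE_far.
  by rewrite ltr_pM2l // (lt_trans ltr01).
have := NE p (ltW (t_gt0 p)).
rewrite /cost NE_alloc_tmin d_p (alloc_upd_low L c qp tp_lt) ltNge (ltW ctp_lt_s') /=.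
rewrite upd_eq maxxx (max_l (ltW tp_lt_v)).
have := NE_sum_inv_gt0; have := NE_tmin_sum_lt_half.
move: (\sum_(k | k != p) _) => T half T_gt0 le_cost.
(* y |-> (1 - y T) y increases below 1 / (2 T): this is where L > 2 (n - 1) is used. *)
have Ttp_le : T * t p <= T * tmin d by rewrite ler_wpM2l ?ltW.
have : 0 < (tmin d - t p) * (1 - T * (tmin d + t p)) by apply: mulr_gt0; lra.
lra.
Qed.

Lemma NE_tmin_le_t_other m : m != p -> tmin d <= t m.
Proof.
move=> mp; rewrite leNgt; apply/negP => tm_lt_v.
have tm_gt0 := t_gt0 m; have c_gt0 : 0 < c := lt_trans ltr01 c_gt1.
have cvc : c * (tmin d / c) = tmin d by rewrite mulrC divfK ?gt_eqF.
have v_gt0 : 0 < tmin d by lra.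
have vc_lt_v : tmin d / c < tmin d by rewrite ltr_pdivrMr // ltr_pMr.
have v_lt_cv : tmin d < c * tmin d by rewrite ltr_pMl.
(* Declaring x within a factor c below tmin d puts the deviation in case (ii). *)
have [x [tm_le_x y_le_x x_lt_v]] :
    exists x, [/\ t m <= x, (tmin d + tmin d / c) / 2 <= x & x < tmin d].
  exists (Num.max (t m) ((tmin d + tmin d / c) / 2)).
  by rewrite !le_max !lexx orbT gt_max tm_lt_v /=; split=> //; lra.
have v_lt_cx : tmin d < c * x.
  have : c * ((tmin d + tmin d / c) / 2) <= c * x by rewrite ler_pM2l.
  lra.
have x_lt k : k != m -> x < d k.
  move=> km; apply: lt_le_trans x_lt_v _; exact: tmin_le.
have pm : p != m by rewrite eq_sym.
have s'_le_v : tsec (upd d m x) <= tmin d.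
  have x_lt_p : tmin (upd d m x) < upd d m x p by rewrite tmin_upd_low // upd_neq // x_lt.
  by rewrite -d_p -(upd_neq d x pm) (tsec_le x_lt_p x_lt_p).
have := NE m (le_trans (ltW tm_gt0) tm_le_x).
rewrite /cost (alloc_upd_low L c pm x_lt) (le_lt_trans s'_le_v v_lt_cx).
rewrite upd_eq (max_l tm_le_x).
rewrite alloc_far_other ?NE_tmin_neq_tsec ?NE_far ?inE ?gt_eqF ?others_gt //.
have dm_gt0 : 0 < d m := le_lt_trans tmin_d_ge0 (others_gt mp).
have : tmin d / (L * d m) * d m <= tmin d / (L * d m) * Num.max (d m) (t m).
  by rewrite ler_wpM2l ?le_max ?lexx // divr_ge0 ?tmin_d_ge0 // mulr_ge0 // ltW.
rewrite invfM mulrA mulfVK ?gt_eqF //.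
move: (_ * Num.max _ _) => C v_le_C C_le.
have : 0 < (tmin d - x) * L^-1 by rewrite mulr_gt0 ?invr_gt0 //; lra.
lra.
Qed.

Lemma NE_tp_le_tmin : t p <= tmin d.
Proof.
rewrite leNgt; apply/negP => v_lt_tp.
have [q qp] := exists_neq n_ge2 p.
have v_lt_s : tmin d < tsec d := tmin_lt_tsec (others_gt qp).
have [x [v_lt_x x_lt_tp x_lt_s]] : exists x, [/\ tmin d < x, x < t p & x < tsec d].
  exists ((tmin d + Num.min (t p) (tsec d)) / 2).
  have : Num.min (t p) (tsec d) <= t p by rewrite ge_min lexx.
  have : Num.min (t p) (tsec d) <= tsec d by rewrite ge_min lexx orbT.
  have : tmin d < Num.min (t p) (tsec d) by rewrite lt_min v_lt_tp.
  move: (Num.min _ _) => y; split; lra.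
have x_lt k : k != p -> x < d k.
  by move=> kp; apply: lt_le_trans x_lt_s (tsec_le (others_gt kp) (others_gt kp)).
have := NE p (le_trans tmin_d_ge0 (ltW v_lt_x)).
rewrite /cost NE_alloc_tmin d_p (alloc_upd_low L c qp x_lt) upd_eq.
rewrite (max_r (ltW v_lt_tp)) (max_r (ltW x_lt_tp)).
have : 1 < L * alloc L c d p by apply: NE_alloc_min_gt; rewrite inE d_p.
rewrite NE_alloc_tmin; have := NE_sum_inv_gt0.
have tp_gt0 := t_gt0 p; have [invL_gt0 _] := invL_bounds.
move: (\sum_(k | k != p) _) => T T_gt0 A_gt.
have invL_lt_A : L^-1 < 1 - tmin d * T by rewrite -[L^-1]mulr1 ltr_pdivrMl.
case: ifP => _ le_cost.
  have : 0 < (1 - tmin d * T - L^-1) * t p by apply: mulr_gt0; lra.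
  lra.
have : 0 < (x - tmin d) * (T * t p) by rewrite !mulr_gt0 //; lra.
lra.
Qed.

Lemma NE_tmin_t : tmin t = tmin d.
Proof.
have v_le_t j : tmin d <= t j.
  by case: (eqVneq j p) => [->|jp]; [exact: NE_tmin_le_tp | exact: NE_tmin_le_t_other].
have tp_eq : t p = tmin d by apply/le_anti; rewrite NE_tp_le_tmin v_le_t.
by rewrite (tmin_eq (i := p)) // => j; rewrite tp_eq.
Qed.

Lemma NE_makespan_le : makespan L c t d <= (1 + (n - 1)%:R / L) * tmin d.
Proof.
rewrite /makespan (bigD1 p) //=.
have cost_p : alloc L c d p * Num.max (d p) (t p) <= tmin d.
  rewrite NE_alloc_tmin d_p (max_l NE_tp_le_tmin) ler_piMl ?tmin_d_ge0 //.
  by rewrite gerBl mulr_ge0 ?tmin_d_ge0 // ltW ?NE_sum_inv_gt0.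
have cost_others :
    \sum_(i | i != p) alloc L c d i * Num.max (d i) (t i) <= (n - 1)%:R * (tmin d / L).
  have -> : (n - 1)%:R * (tmin d / L) = \sum_(i | i != p) tmin d / L.
    by rewrite (eq_bigl (mem (predC1 p))) // sumr_const cardC1 card_ord subn1 mulr_natl.
  by apply: ler_sum => i ip; apply: NE_cost_le_shared_tmin d_p; rewrite eq_sym.
lra.
Qed.

End UniqueMinimum.

End Equilibrium.

Theorem theorem2 (R : realFieldType) (n : nat) (L c : R) :
  (2 <= n)%N -> 2 * (n - 1)%:R < L -> 1 < c ->
  forall t d : 'I_n -> R,
    (forall i, 0 < t i) ->
    pureNE L c t d ->
    makespan L c t d <= (1 + (n - 1)%:R / L) * tmin t.
Proof.
move=> n_ge2 L_gt c_gt1 t d t_gt0 [d_ge0 NE].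
have [p d_p] := tmin_mem d (Ordinal (ltnW n_ge2)).
rewrite (NE_tmin_t n_ge2 L_gt c_gt1 t_gt0 d_ge0 NE d_p).
exact: (NE_makespan_le n_ge2 L_gt c_gt1 t_gt0 d_ge0 NE d_p).
Qed.
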